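(* Let $\alpha\neq0$ and consider the control system on $G$ $\dot x=u\alpha x,\quad \dot y=x-1,\quad u\in\mathcal U.$ If $(x_1,y_1),(x_2,y_2)\in G$ satisfy $x_1<1<x_2$, then $(x_2,y_2)\in\mathcal O^+(x_1,y_1)$ and $(x_1,y_1)\in\mathcal O^+(x_2,y_2)$.
   Context: Let $G=\{(x,y)\in\mathbb{R}^2:x>0\}$. Fix $\Omega=[u_*,u^*]$ with $u_*<0<u^*$. The admissible controls $\mathcal U$ are the piecewise constant functions $\mathbb{R}\to\Omega$. We write $\varphi(t,p,u)$ for the solution starting at $p$, and $\mathcal O^+(p)=\{\varphi(t,p,u):t\ge0,u\in\mathcal U\}$. *)

From Stdlib Require Import Reals.
Open Scope R_scope.

Definition inG (p : R * R) : Prop := 0 < fst p.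

Definition is_partition (T : R) (n : nat) (t : nat -> R) : Prop :=
  t O = 0 /\ t n = T /\ (forall i, (i < n)%nat -> t i < t (S i)).

Definition const_on_pieces (u : R -> R) (n : nat) (t : nat -> R) : Prop :=
  forall i, (i < n)%nat -> forall s, t i <= s < t (S i) -> u s = u (t i).

Definition admissible (u_lo u_hi : R) (u : R -> R) : Prop :=
  (forall s, u_lo <= u s <= u_hi) /\
  (forall a b, a < b -> exists n (t : nat -> R),
      t O = a /\ t n = b /\ (forall i, (i < n)%nat -> t i < t (S i)) /\
      const_on_pieces u n t).

(* (x,y) is the (Caratheodory) solution on [0,T] of
     x' = u alpha x,  y' = x - 1
   with control u, i.e. (x,y) is continuous on [0,T] and satisfies the ODE on
   the interior of each piece of a partition of [0,T] on which u is constant. *)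
Definition is_solution (alpha : R) (u : R -> R) (T : R) (x y : R -> R) : Prop :=
  exists n (t : nat -> R),
    is_partition T n t /\ const_on_pieces u n t /\
    (forall s, 0 <= s <= T -> continuity_pt x s /\ continuity_pt y s) /\
    (forall i, (i < n)%nat -> forall s, t i < s < t (S i) ->
        derivable_pt_lim x s (u s * alpha * x s) /\
        derivable_pt_lim y s (x s - 1)).

Definition in_pos_orbit (alpha u_lo u_hi : R) (p q : R * R) : Prop :=
  exists (T : R) (u x y : R -> R),
    0 <= T /\ admissible u_lo u_hi u /\ is_solution alpha u T x y /\
    x 0 = fst p /\ y 0 = snd p /\
    (forall s, 0 <= s <= T -> inG (x s, y s)) /\
    x T = fst q /\ y T = snd q.

From Stdlib Require Import Reals Lra Lia.
From Coquelicot Require Import Coquelicot.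
Open Scope R_scope.

(* Running one trajectory after another gives a trajectory, so the positive
   orbit relation is transitive.  With the control u = 0 the point drifts
   vertically: x stays fixed and y moves with speed x - 1.  With a constant
   control c, of the sign making c * alpha * ln (x_b / x_a) >= 0, the
   coordinate x moves exponentially from x_a to x_b in nonnegative time, and
   y is shifted by an amount A that does not depend on the initial y.  Going
   from (x_a, y_a) to (x_b, y_b) by drifting at x_a, moving x_a to x_b, and
   drifting at x_b, the two drift speeds x_a - 1 and x_b - 1 have opposite
   signs when x_a and x_b lie on opposite sides of 1, so nonnegative drift
   times realise any vertical displacement y_b - y_a - A. *)

Definition partition_of (a b : R) (n : nat) (t : nat -> R) : Prop :=
  t O = a /\ t n = b /\ (forall i, (i < n)%nat -> t i < t (S i)).

Definition piecewise_constant (u : R -> R) : Prop :=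
  forall a b, a < b -> exists n t, partition_of a b n t /\ const_on_pieces u n t.

Lemma admissible_intro (u_lo u_hi : R) (u : R -> R) :
  (forall s, u_lo <= u s <= u_hi) -> piecewise_constant u -> admissible u_lo u_hi u.
Proof.
  intros Hb Hpc; split; [exact Hb|].
  intros a b Hab; destruct (Hpc a b Hab) as (n & t & Ht & Hc).
  exists n, t; unfold partition_of in Ht; tauto.
Qed.

Lemma admissible_piecewise_constant (u_lo u_hi : R) (u : R -> R) :
  admissible u_lo u_hi u -> piecewise_constant u.
Proof.
  intros [_ Hpc] a b Hab; destruct (Hpc a b Hab) as (n & t & H0 & Hn & Hinc & Hc).
  exists n, t; repeat split; auto.
Qed.

Lemma partition_le (a b : R) (n : nat) (t : nat -> R) :
  partition_of a b n t -> forall i j, (i <= j <= n)%nat -> t i <= t j.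
Proof.
  intros (_ & _ & Hinc) i j; induction j as [|j IH]; intros Hij.
  - replace i with O by lia; lra.
  - destruct (Nat.eq_dec i (S j)) as [->|Hne]; [lra|].
    assert (t i <= t j) by (apply IH; lia).
    assert (t j < t (S j)) by (apply Hinc; lia).
    lra.
Qed.

Lemma partition_piece_bounds (a b : R) (n : nat) (t : nat -> R) (i : nat) :
  partition_of a b n t -> (i < n)%nat -> a <= t i /\ t (S i) <= b.
Proof.
  intros Hp Hi; pose proof Hp as (H0 & Hn & _); rewrite <- H0, <- Hn.
  split; apply (partition_le a b n t Hp); lia.
Qed.

Definition shift_partition (p : R) (t : nat -> R) (i : nat) : R := p + t i.

Lemma partition_shift (p a b : R) (n : nat) (t : nat -> R) :
  partition_of a b n t -> partition_of (p + a) (p + b) n (shift_partition p t).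
Proof.
  intros (H0 & Hn & Hinc); unfold shift_partition; repeat split.
  - now rewrite H0.
  - now rewrite Hn.
  - intros i Hi; specialize (Hinc i Hi); lra.
Qed.

Definition concat_partition (n1 : nat) (t1 t2 : nat -> R) (i : nat) : R :=
  if (i <=? n1)%nat then t1 i else t2 (i - n1)%nat.

Section Concatenation.

Variables (a b c : R) (n1 n2 : nat) (t1 t2 : nat -> R).
Hypotheses (Ht1 : partition_of a b n1 t1) (Ht2 : partition_of b c n2 t2).

Let t := concat_partition n1 t1 t2.

Lemma concat_partition_left (i : nat) : (i <= n1)%nat -> t i = t1 i.
Proof. intros Hi; unfold t, concat_partition; now rewrite (proj2 (Nat.leb_le i n1) Hi). Qed.

Lemma concat_partition_right (i : nat) : (n1 <= i)%nat -> t i = t2 (i - n1)%nat.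
Proof.
  intros Hi; unfold t, concat_partition; destruct (Nat.leb_spec i n1); [|reflexivity].
  replace i with n1 by lia; rewrite Nat.sub_diag.
  destruct Ht1 as (_ & -> & _); destruct Ht2 as (-> & _); reflexivity.
Qed.

Lemma concat_partition_piece (i : nat) : (i < n1 + n2)%nat ->
  ((i < n1)%nat /\ t i = t1 i /\ t (S i) = t1 (S i)) \/
  (exists j, (j < n2)%nat /\ t i = t2 j /\ t (S i) = t2 (S j)).
Proof.
  intros Hi; destruct (Nat.lt_ge_cases i n1).
  - left; rewrite !concat_partition_left by lia; auto.
  - right; exists (i - n1)%nat; rewrite !concat_partition_right by lia.
    replace (S i - n1)%nat with (S (i - n1)) by lia; split; [lia|auto].
Qed.

Lemma partition_concat : partition_of a c (n1 + n2) t.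
Proof.
  destruct Ht1 as (H10 & _ & H1inc); destruct Ht2 as (_ & H2n & H2inc).
  repeat split.
  - rewrite concat_partition_left by lia; exact H10.
  - rewrite concat_partition_right by lia; now replace (n1 + n2 - n1)%nat with n2 by lia.
  - intros i Hi; destruct (concat_partition_piece i Hi) as [(? & -> & ->)|(j & ? & -> & ->)];
      auto.
Qed.

Lemma const_on_pieces_concat (u : R -> R) :
  const_on_pieces u n1 t1 -> const_on_pieces u n2 t2 -> const_on_pieces u (n1 + n2) t.
Proof.
  intros Hc1 Hc2 i Hi s;
    destruct (concat_partition_piece i Hi) as [(? & -> & ->)|(j & ? & -> & ->)]; auto.
Qed.

End Concatenation.

Definition glue (p : R) (f g : R -> R) (s : R) : R :=
  if Rlt_dec s p then f s else g (s - p).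

Lemma glue_lt (p : R) (f g : R -> R) (s : R) : s < p -> glue p f g s = f s.
Proof. intros Hs; unfold glue; destruct Rlt_dec; [reflexivity|lra]. Qed.

Lemma glue_ge (p : R) (f g : R -> R) (s : R) : p <= s -> glue p f g s = g (s - p).
Proof. intros Hs; unfold glue; destruct Rlt_dec; [lra|reflexivity]. Qed.

Lemma const_on_pieces_shift (p : R) (u : R -> R) (n : nat) (t : nat -> R) :
  const_on_pieces u n t ->
  const_on_pieces (fun s => u (s - p)) n (shift_partition p t).
Proof.
  intros Hc i Hi s Hs; unfold shift_partition in *.
  replace (p + t i - p) with (t i) by ring; apply Hc; [exact Hi|lra].
Qed.

Lemma piecewise_constant_shift (p : R) (u : R -> R) :
  piecewise_constant u -> piecewise_constant (fun s => u (s - p)).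
Proof.
  intros Hu a b Hab.
  destruct (Hu (a - p) (b - p) ltac:(lra)) as (n & t & Ht & Hc).
  exists n, (shift_partition p t); split; [|now apply const_on_pieces_shift].
  pose proof (partition_shift p _ _ n t Ht) as Hs.
  now replace (p + (a - p)) with a in Hs by ring; replace (p + (b - p)) with b in Hs by ring.
Qed.

Lemma const_on_pieces_glue_left (p a b : R) (f g : R -> R) (n : nat) (t : nat -> R) :
  partition_of a b n t -> b <= p -> const_on_pieces f n t ->
  const_on_pieces (glue p f g) n t.
Proof.
  intros Ht Hbp Hc i Hi s Hs.
  destruct (partition_piece_bounds a b n t i Ht Hi) as [_ Hb].
  rewrite !glue_lt by lra; auto.
Qed.

Lemma const_on_pieces_glue_right (p a b : R) (f g : R -> R) (n : nat) (t : nat -> R) :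
  partition_of a b n t -> p <= a -> const_on_pieces (fun s => g (s - p)) n t ->
  const_on_pieces (glue p f g) n t.
Proof.
  intros Ht Hpa Hc i Hi s Hs.
  destruct (partition_piece_bounds a b n t i Ht Hi) as [Ha _].
  rewrite !glue_ge by lra; now apply Hc.
Qed.

Lemma piecewise_constant_glue (p : R) (f g : R -> R) :
  piecewise_constant f -> piecewise_constant g -> piecewise_constant (glue p f g).
Proof.
  intros Hf Hg a b Hab; apply piecewise_constant_shift with (p := p) in Hg.
  destruct (Rle_dec b p) as [Hbp|Hbp]; [|destruct (Rle_dec p a) as [Hpa|Hpa]].
  - destruct (Hf a b Hab) as (n & t & Ht & Hc).
    exists n, t; split; [exact Ht|]; now apply (const_on_pieces_glue_left p a b).
  - destruct (Hg a b Hab) as (n & t & Ht & Hc).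
    exists n, t; split; [exact Ht|]; now apply (const_on_pieces_glue_right p a b).
  - destruct (Hf a p ltac:(lra)) as (n1 & t1 & Ht1 & Hc1).
    destruct (Hg p b ltac:(lra)) as (n2 & t2 & Ht2 & Hc2).
    exists (n1 + n2)%nat, (concat_partition n1 t1 t2); split.
    + now apply (partition_concat a p b).
    + apply (const_on_pieces_concat a p b); auto.
      * apply (const_on_pieces_glue_left p a p); auto; lra.
      * apply (const_on_pieces_glue_right p p b); auto; lra.
Qed.

Lemma admissible_glue (u_lo u_hi p : R) (f g : R -> R) :
  admissible u_lo u_hi f -> admissible u_lo u_hi g -> admissible u_lo u_hi (glue p f g).
Proof.
  intros Hf Hg; apply admissible_intro.
  - intros s; unfold glue; destruct Rlt_dec; [apply Hf|apply Hg].
  - apply piecewise_constant_glue; eapply admissible_piecewise_constant; eassumption.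
Qed.

Lemma continuity_pt_shift (p : R) (g : R -> R) (s : R) :
  continuity_pt g (s - p) -> continuity_pt (fun z => g (z - p)) s.
Proof.
  intros Hg; apply (continuity_pt_comp (fun z => z - p) g s); [|exact Hg].
  apply continuity_pt_minus; [apply continuity_pt_id|apply continuity_pt_const; now intros ? ?].
Qed.

Lemma continuity_pt_glue_at (p : R) (f g : R -> R) :
  continuity_pt f p -> continuity_pt g 0 -> f p = g 0 -> continuity_pt (glue p f g) p.
Proof.
  intros Hf Hg0 Hfg.
  assert (Hg : continuity_pt (fun z => g (z - p)) p)
    by (apply continuity_pt_shift; now rewrite Rminus_diag).
  intros eps Heps.
  destruct (Hf eps Heps) as (d1 & Hd1 & H1); destruct (Hg eps Heps) as (d2 & Hd2 & H2).
  exists (Rmin d1 d2); split; [now apply Rmin_pos|].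
  intros z [Hzp Hz]; rewrite (glue_ge p f g p) by lra.
  pose proof (Rmin_l d1 d2); pose proof (Rmin_r d1 d2).
  unfold glue; destruct Rlt_dec.
  - rewrite Rminus_diag, <- Hfg; apply H1; split; [exact Hzp|lra].
  - apply H2; split; [exact Hzp|lra].
Qed.

Lemma glue_locally_lt (p : R) (f g : R -> R) (s : R) :
  s < p -> locally s (fun z => f z = glue p f g z).
Proof.
  intros Hs; apply (locally_interval _ s m_infty p); simpl; auto.
  intros z _ Hz; now rewrite glue_lt.
Qed.

Lemma glue_locally_gt (p : R) (f g : R -> R) (s : R) :
  p < s -> locally s (fun z => g (z - p) = glue p f g z).
Proof.
  intros Hs; apply (locally_interval _ s p p_infty); simpl; auto.
  intros z Hz _; rewrite glue_ge; [reflexivity|simpl in Hz; lra].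
Qed.

Lemma continuity_pt_glue (p : R) (f g : R -> R) (s : R) :
  (s <= p -> continuity_pt f s) -> (p <= s -> continuity_pt g (s - p)) -> f p = g 0 ->
  continuity_pt (glue p f g) s.
Proof.
  intros Hf Hg Hfg; destruct (Rtotal_order s p) as [Hs|[->|Hs]].
  - apply (continuity_pt_ext_loc f); [now apply glue_locally_lt|apply Hf; lra].
  - apply continuity_pt_glue_at; [apply Hf; lra|rewrite <- (Rminus_diag p); apply Hg; lra|exact Hfg].
  - apply (continuity_pt_ext_loc (fun z => g (z - p))); [now apply glue_locally_gt|].
    apply continuity_pt_shift, Hg; lra.
Qed.

Lemma derivable_pt_lim_glue_lt (p : R) (f g : R -> R) (s l : R) :
  s < p -> derivable_pt_lim f s l -> derivable_pt_lim (glue p f g) s l.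
Proof.
  intros Hs Hf; apply is_derive_Reals; apply is_derive_Reals in Hf.
  apply (is_derive_ext_loc f); [now apply glue_locally_lt|exact Hf].
Qed.

Lemma derivable_pt_lim_glue_gt (p : R) (f g : R -> R) (s l : R) :
  p < s -> derivable_pt_lim g (s - p) l -> derivable_pt_lim (glue p f g) s l.
Proof.
  intros Hs Hg; apply is_derive_Reals; apply is_derive_Reals in Hg.
  apply (is_derive_ext_loc (fun z => g (z - p))); [now apply glue_locally_gt|].
  rewrite <- (scal_one l); apply (is_derive_comp g); [exact Hg|].
  auto_derive; [exact I|reflexivity].
Qed.

Lemma is_solution_glue (alpha T1 T2 : R) (u1 u2 x1 y1 x2 y2 : R -> R) :
  is_solution alpha u1 T1 x1 y1 -> is_solution alpha u2 T2 x2 y2 ->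
  x1 T1 = x2 0 -> y1 T1 = y2 0 ->
  is_solution alpha (glue T1 u1 u2) (T1 + T2) (glue T1 x1 x2) (glue T1 y1 y2).
Proof.
  intros (n1 & t1 & Ht1 & Hc1 & Hcont1 & Hd1) (n2 & t2 & Ht2 & Hc2 & Hcont2 & Hd2) Hx Hy.
  assert (Ht2' : partition_of T1 (T1 + T2) n2 (shift_partition T1 t2)).
  { pose proof (partition_shift T1 0 T2 n2 t2 Ht2) as H; now rewrite Rplus_0_r in H. }
  exists (n1 + n2)%nat, (concat_partition n1 t1 (shift_partition T1 t2)); split; [|split; [|split]].
  - exact (partition_concat 0 T1 (T1 + T2) n1 n2 _ _ Ht1 Ht2').
  - apply (const_on_pieces_concat 0 T1 (T1 + T2)); auto.
    + apply (const_on_pieces_glue_left T1 0 T1); auto; lra.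
    + apply (const_on_pieces_glue_right T1 T1 (T1 + T2)); auto; [lra|].
      now apply const_on_pieces_shift.
  - intros s Hs; split; apply continuity_pt_glue; auto;
      intros H; first [apply Hcont1 | apply Hcont2]; lra.
  - intros i Hi s Hs.
    destruct (concat_partition_piece 0 T1 (T1 + T2) n1 n2 _ _ Ht1 Ht2' i Hi)
      as [(Hi1 & Hl & Hr)|(j & Hj & Hl & Hr)]; rewrite Hl, Hr in Hs.
    + destruct (partition_piece_bounds 0 T1 n1 t1 i Ht1 Hi1).
      rewrite !glue_lt by lra.
      split; apply derivable_pt_lim_glue_lt; try lra; now apply (Hd1 i).
    + destruct (partition_piece_bounds 0 T2 n2 t2 j Ht2 Hj).
      unfold shift_partition in Hs; rewrite !glue_ge by lra.
      split; apply derivable_pt_lim_glue_gt; try lra; apply (Hd2 j); auto; lra.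
Qed.

Lemma glue_at_0 (p : R) (f g : R -> R) :
  0 <= p -> f p = g 0 -> glue p f g 0 = f 0.
Proof.
  intros Hp Hfg; destruct (Rle_lt_or_eq 0 p Hp) as [H|<-].
  - now apply glue_lt.
  - rewrite glue_ge by lra; now rewrite Rminus_0_r.
Qed.

Lemma glue_at_end (p T : R) (f g : R -> R) :
  0 <= T -> glue p f g (p + T) = g T.
Proof. intros HT; rewrite glue_ge by lra; f_equal; ring. Qed.

Lemma in_pos_orbit_trans (alpha u_lo u_hi : R) (p q r : R * R) :
  in_pos_orbit alpha u_lo u_hi p q -> in_pos_orbit alpha u_lo u_hi q r ->
  in_pos_orbit alpha u_lo u_hi p r.
Proof.
  intros (T1 & u1 & x1 & y1 & HT1 & Hu1 & Hs1 & Hx10 & Hy10 & HG1 & Hx1T & Hy1T)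
         (T2 & u2 & x2 & y2 & HT2 & Hu2 & Hs2 & Hx20 & Hy20 & HG2 & Hx2T & Hy2T).
  assert (Hx : x1 T1 = x2 0) by congruence.
  assert (Hy : y1 T1 = y2 0) by congruence.
  exists (T1 + T2), (glue T1 u1 u2), (glue T1 x1 x2), (glue T1 y1 y2).
  split; [lra|]; split; [now apply admissible_glue|]; split; [now apply is_solution_glue|].
  split; [now rewrite glue_at_0|]; split; [now rewrite glue_at_0|].
  split; [|split; now rewrite glue_at_end].
  intros s Hs; unfold inG; simpl; unfold glue; destruct Rlt_dec.
  - apply (HG1 s); lra.
  - apply (HG2 (s - T1)); lra.
Qed.

Lemma partition_exists (a b : R) : a <= b -> exists n t, partition_of a b n t.
Proof.
  intros Hab; destruct (Rle_lt_or_eq a b Hab) as [Hlt|<-].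
  - exists 1%nat, (fun i => match i with O => a | _ => b end).
    repeat split; intros i Hi; replace i with O by lia; exact Hlt.
  - exists O, (fun _ => a); repeat split; intros i Hi; lia.
Qed.

Lemma admissible_const (u_lo u_hi c : R) :
  u_lo <= c <= u_hi -> admissible u_lo u_hi (fun _ => c).
Proof.
  intros Hc; apply admissible_intro; [now intros|].
  intros a b Hab; destruct (partition_exists a b ltac:(lra)) as (n & t & Ht).
  now exists n, t.
Qed.

Lemma is_solution_const_control (alpha c T : R) (x y : R -> R) :
  0 <= T ->
  (forall s, derivable_pt_lim x s (c * alpha * x s)) ->
  (forall s, derivable_pt_lim y s (x s - 1)) ->
  is_solution alpha (fun _ => c) T x y.
Proof.
  intros HT Hx Hy; destruct (partition_exists 0 T HT) as (n & t & Ht).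
  exists n, t; split; [exact Ht|]; split; [now intros|]; split.
  - intros s _; split; apply derivable_continuous_pt; eexists; [apply Hx|apply Hy].
  - intros i _ s _; auto.
Qed.

Lemma in_pos_orbit_const_control (alpha u_lo u_hi c T : R) (x y : R -> R) :
  u_lo <= c <= u_hi -> 0 <= T -> (forall s, 0 < x s) ->
  (forall s, derivable_pt_lim x s (c * alpha * x s)) ->
  (forall s, derivable_pt_lim y s (x s - 1)) ->
  in_pos_orbit alpha u_lo u_hi (x 0, y 0) (x T, y T).
Proof.
  intros Hc HT Hpos Hx Hy; exists T, (fun _ => c), x, y.
  split; [exact HT|]; split; [now apply admissible_const|].
  split; [now apply is_solution_const_control|].
  repeat split; intros s _; apply Hpos.
Qed.

Lemma in_pos_orbit_drift (alpha u_lo u_hi x0 y0 t : R) :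
  u_lo <= 0 <= u_hi -> 0 < x0 -> 0 <= t ->
  in_pos_orbit alpha u_lo u_hi (x0, y0) (x0, y0 + (x0 - 1) * t).
Proof.
  intros Hu Hx0 Ht.
  pose proof (in_pos_orbit_const_control alpha u_lo u_hi 0 t
                (fun _ => x0) (fun s => y0 + (x0 - 1) * s) Hu Ht) as H.
  simpl in H; rewrite Rmult_0_r, Rplus_0_r in H; apply H; [now intros|..];
    intros s; apply is_derive_Reals; auto_derive; auto; ring.
Qed.

Lemma in_pos_orbit_exp_arc (alpha u_lo u_hi c x0 y0 T : R) :
  u_lo <= c <= u_hi -> c * alpha <> 0 -> 0 < x0 -> 0 <= T ->
  in_pos_orbit alpha u_lo u_hi (x0, y0)
    (x0 * exp (c * alpha * T), y0 + x0 * (exp (c * alpha * T) - 1) / (c * alpha) - T).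
Proof.
  intros Hc Hk Hx0 HT.
  pose proof (in_pos_orbit_const_control alpha u_lo u_hi c T
                (fun s => x0 * exp (c * alpha * s))
                (fun s => y0 + x0 * (exp (c * alpha * s) - 1) / (c * alpha) - s) Hc HT) as H.
  simpl in H; rewrite Rmult_0_r, exp_0, Rmult_1_r, Rminus_diag, Rmult_0_r, Rdiv_0_l,
    Rplus_0_r, Rminus_0_r in H.
  apply H.
  - intros s; apply Rmult_lt_0_compat; [exact Hx0|apply exp_pos].
  - intros s; apply is_derive_Reals; auto_derive; auto; ring.
  - intros s; apply is_derive_Reals; auto_derive; auto; field.
    split; intros Z; apply Hk; rewrite Z; ring.
Qed.

Lemma exists_control_of_sign (u_lo u_hi alpha L : R) :
  u_lo < 0 < u_hi -> alpha <> 0 ->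
  exists c, u_lo <= c <= u_hi /\ c * alpha <> 0 /\ 0 <= L * (c * alpha).
Proof.
  intros Hu Ha; destruct (Rle_dec 0 (L * alpha)) as [H|H].
  - exists u_hi; split; [lra|split; [apply Rmult_integral_contrapositive; lra|nra]].
  - exists u_lo; split; [lra|split; [apply Rmult_integral_contrapositive; lra|nra]].
Qed.

Lemma in_pos_orbit_change_x (alpha u_lo u_hi xa xb : R) :
  u_lo < 0 < u_hi -> alpha <> 0 -> 0 < xa -> 0 < xb ->
  exists A, forall y, in_pos_orbit alpha u_lo u_hi (xa, y) (xb, y + A).
Proof.
  intros Hu Ha Hxa Hxb; set (L := ln (xb / xa)).
  destruct (exists_control_of_sign u_lo u_hi alpha L Hu Ha) as (c & Hc & Hk & HLk).
  set (k := c * alpha) in *; set (T := L / k).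
  assert (HT : 0 <= T).
  { unfold T; replace (L / k) with (L * k / (k * k)) by (field; exact Hk).
    apply Rdiv_le_0_compat; [exact HLk|]; nra. }
  assert (HkT : exp (k * T) = xb / xa).
  { unfold T; replace (k * (L / k)) with L by (field; exact Hk).
    apply exp_ln, Rdiv_lt_0_compat; assumption. }
  exists (xa * (exp (k * T) - 1) / k - T); intros y.
  pose proof (in_pos_orbit_exp_arc alpha u_lo u_hi c xa y T Hc Hk Hxa HT) as H.
  fold k in H; rewrite HkT in H |- *.
  replace (xa * (xb / xa)) with xb in H by (field; lra).
  now replace (y + (xa * (xb / xa - 1) / k - T)) with (y + xa * (xb / xa - 1) / k - T) by ring.
Qed.

Lemma exists_nonneg_combination (a b D : R) :
  a * b < 0 -> exists s t, 0 <= s /\ 0 <= t /\ a * s + b * t = D.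
Proof.
  intros Hab; assert (Ha : a <> 0) by (intros ->; lra); assert (Hb : b <> 0) by (intros ->; lra).
  destruct (Rle_dec 0 (D / a)) as [H|H].
  - exists (D / a), 0; repeat split; [exact H|lra|field; assumption].
  - exists 0, (D / b); repeat split; [lra| |field; assumption].
    replace (D / b) with (- (D / a) * (- (a * b)) / (b * b)) by (field; auto).
    apply Rdiv_le_0_compat; nra.
Qed.

Lemma in_pos_orbit_across_one (alpha u_lo u_hi xa ya xb yb : R) :
  u_lo < 0 < u_hi -> alpha <> 0 -> 0 < xa -> 0 < xb -> (xa - 1) * (xb - 1) < 0 ->
  in_pos_orbit alpha u_lo u_hi (xa, ya) (xb, yb).
Proof.
  intros Hu Ha Hxa Hxb Hopp.
  destruct (in_pos_orbit_change_x alpha u_lo u_hi xa xb Hu Ha Hxa Hxb) as (A & Harc).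
  destruct (exists_nonneg_combination (xa - 1) (xb - 1) (yb - ya - A) Hopp)
    as (s & t & Hs & Ht & Hst).
  apply in_pos_orbit_trans with (xa, ya + (xa - 1) * s);
    [apply in_pos_orbit_drift; auto; lra|].
  apply in_pos_orbit_trans with (xb, ya + (xa - 1) * s + A); [apply Harc|].
  replace yb with (ya + (xa - 1) * s + A + (xb - 1) * t) by lra.
  apply in_pos_orbit_drift; auto; lra.
Qed.

Theorem mainTheorem6 (u_lo u_hi alpha x1 y1 x2 y2 : R) :
  u_lo < 0 < u_hi -> alpha <> 0 ->
  inG (x1, y1) -> inG (x2, y2) ->
  x1 < 1 < x2 ->
  in_pos_orbit alpha u_lo u_hi (x1, y1) (x2, y2) /\
  in_pos_orbit alpha u_lo u_hi (x2, y2) (x1, y1).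
Proof.
  unfold inG; simpl; intros Hu Ha Hx1 Hx2 Hx.
  split; apply in_pos_orbit_across_one; auto; nra.
Qed.
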